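(* Let $K$ be a field of characteristic not equal to $2$ and let $S$ be a (unital, not necessarily associative) $K$-algebra equipped with a pseudo-degree function $\chi$. Let $a \in N(S)$ with $m=\chi(a)>0$, and suppose that the centralizer $C_S(a)$ satisfies condition $D(\ell)$ for some positive integer $\ell$. Then the subalgebra $K[a]$ of $S$ generated by $a$ is isomorphic to a polynomial ring in one variable over $K$, and $C_S(a)$ is a free left $K[a]$-module of rank at most $\ell m$.
   Context: All algebras are unital but not necessarily associative, and $K$ is embedded in $S$ via the unit. For $a,b,c\in S$, the nucleus $N(S)$ is the set of $a\in S$ such that $a(bc)=(ab)c$, $(ba)c=b(ac)$ and $(bc)a=b(ca)$ for all $b,c\in S$ (i.e. $a$ lies in the left, middle and right nuclei). The centralizer $C_S(a)$ is the set of elements of $S$ commuting with $a$. A pseudo-degree function on $S$ is a map $\chi:S\to\mathbb{Z}\cup\{-\infty\}$ such that $\chi(x)=-\infty$ iff $x=0$; $\chi(xy)=\chi(x)+\chi(y)$ for all $x,y\in S$; and $\chi(x+y)\le\max(\chi(x),\chi(y))$ for all $x,y\in S$. For $K$ of characteristic not $2$ and a positive integer $\ell$, a subalgebra $B\subseteq S$ satisfies condition $D(\ell)$ if $\chi(b)\ge 0$ for all nonzero $b\in B$, and whenever $b_1,\dots,b_{\ell+1}\in B$ all satisfy $\chi(b_1)=\dots=\chi(b_{\ell+1})$, there exist $\alpha_1,\dots,\alpha_{\ell+1}\in K$, not all zero, with $\chi\left(\sum_{i=1}^{\ell+1}\alpha_i b_i\right)<\chi(b_1)$. *)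

From HB Require Import structures.
From mathcomp Require Import all_boot all_order all_algebra.
Set Implicit Arguments. Unset Strict Implicit. Unset Printing Implicit Defensive.
Import Order.TTheory GRing.Theory Num.Theory.
Local Open Scope ring_scope.

(* Unital, not necessarily associative K-algebra: a K-vector space with a
   K-bilinear multiplication and a two-sided unit. K embeds via k |-> k *: 1. *)
Record naalg (K : fieldType) := NAAlg {
  nacarrier :> lmodType K;
  namul : nacarrier -> nacarrier -> nacarrier;
  naone : nacarrier;
  namulDl : forall x y z, namul (x + y) z = namul x z + namul y z;
  namulDr : forall x y z, namul x (y + z) = namul x y + namul x z;
  namulZl : forall (k : K) x y, namul (k *: x) y = k *: namul x y;
  namulZr : forall (k : K) x y, namul x (k *: y) = k *: namul x y;
  namul1l : forall x, namul naone x = x;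
  namul1r : forall x, namul x naone = x
}.

Section Defs.
Variables (K : fieldType) (S : naalg K).
Local Notation "x ** y" := (namul x y) (at level 40, left associativity).

Definition in_nucleus (a : S) : Prop :=
  forall b c : S, a ** (b ** c) = (a ** b) ** c
               /\ (b ** a) ** c = b ** (a ** c)
               /\ (b ** c) ** a = b ** (c ** a).

Definition centralizer (a : S) : pred S := fun x => x ** a == a ** x.

Fixpoint napow (a : S) (n : nat) : S :=
  if n is n'.+1 then napow a n' ** a else naone S.

Definition naeval (a : S) (p : {poly K}) : S :=
  \sum_(i < size p) p`_i *: napow a i.

Definition is_subalg (B : S -> Prop) : Prop :=
  B (naone S)
  /\ (forall x y, B x -> B y -> B (x + y))
  /\ (forall (k : K) x, B x -> B (k *: x))
  /\ (forall x y, B x -> B y -> B (x ** y)).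

Definition gen_subalg (a : S) : S -> Prop :=
  fun x => forall B : S -> Prop, is_subalg B -> B a -> B x.

(* Z ∪ {-oo}, with None = -oo. *)
Definition degadd (x y : option int) : option int :=
  match x, y with Some m, Some n => Some (m + n) | _, _ => None end.
Definition degle (x y : option int) : bool :=
  match x, y with
  | None, _ => true
  | Some _, None => false
  | Some m, Some n => (m <= n)%R
  end.
Definition deglt (x y : option int) : bool :=
  match x, y with
  | _, None => false
  | None, Some _ => true
  | Some m, Some n => (m < n)%R
  end.
Definition degmax (x y : option int) : option int :=
  if degle x y then y else x.

Definition pseudo_degree (chi : S -> option int) : Prop :=
  (forall x, chi x = None <-> x = 0)
  /\ (forall x y, chi (x ** y) = degadd (chi x) (chi y))
  /\ (forall x y, degle (chi (x + y)) (degmax (chi x) (chi y))).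

Definition condD (chi : S -> option int) (l : nat) (B : pred S) : Prop :=
  (forall b, b \in B -> b != 0 -> degle (Some 0) (chi b))
  /\ (forall b : 'I_l.+1 -> S,
        (forall i, b i \in B) -> (forall i, b i != 0) ->
        (forall i, chi (b i) = chi (b ord0)) ->
        exists alpha : 'I_l.+1 -> K,
          (exists i, alpha i != 0)
          /\ deglt (chi (\sum_i alpha i *: b i)) (chi (b ord0))).

End Defs.

From HB Require Import structures.
From mathcomp Require Import all_boot all_order all_algebra.
From mathcomp Require Import zify.
From Stdlib Require Import Classical FunctionalExtensionality.
Set Implicit Arguments. Unset Strict Implicit. Unset Printing Implicit Defensive.
Import Order.TTheory GRing.Theory Num.Theory.
Local Open Scope ring_scope.

(* Since a lies in the nucleus, p |-> p(a) is a K-algebra map, and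
   chi(p(a)) = m deg p makes it injective.  In C = C_S(a) pick greedily
   c_1, c_2, ..., each of minimal degree among the elements of C outside the
   K[a]-span of the previous ones.  Such a family admits no cancellation of
   leading terms: a cancellation would produce an element of C outside the
   span of smaller degree than the last c_i.  Hence it is K[a]-free.  It has
   at most l m members: among l m + 1 of them, l + 1 have degrees congruent
   mod m; multiplying by powers of a makes these degrees equal, and D(l) then
   forces a cancellation of leading terms. *)

Local Notation "x ** y" := (namul x y) (at level 40, left associativity).
Local Notation "a ^^ n" := (napow a n) (at level 29).

Section NonassociativeAlgebra.
Variables (K : fieldType) (S : naalg K).

Lemma namul0l (x : S) : 0 ** x = 0.
Proof. by have := namulZl 0 0 x; rewrite !scale0r. Qed.

Lemma namul0r (x : S) : x ** 0 = 0.
Proof. by have := namulZr 0 x 0; rewrite !scale0r. Qed.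

Lemma namulBl (x y z : S) : (x - y) ** z = x ** z - y ** z.
Proof. by rewrite namulDl -scaleN1r namulZl scaleN1r. Qed.

Lemma namul_suml (I : Type) (r : seq I) (P : pred I) (F : I -> S) (y : S) :
  (\sum_(i <- r | P i) F i) ** y = \sum_(i <- r | P i) F i ** y.
Proof. exact: (big_morph _ (fun u v => namulDl u v y) (namul0l y)). Qed.

Lemma namul_sumr (I : Type) (r : seq I) (P : pred I) (F : I -> S) (y : S) :
  y ** (\sum_(i <- r | P i) F i) = \sum_(i <- r | P i) y ** F i.
Proof. exact: (big_morph _ (namulDr y) (namul0r y)). Qed.

Lemma naone_neq0 (x : S) : x != 0 -> naone S != 0.
Proof. by apply: contraNneq => one0; rewrite -(namul1l x) one0 namul0l. Qed.

End NonassociativeAlgebra.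

Section DegreeOrder.
Implicit Types (x y z : option int).

Lemma degle_refl x : degle x x.
Proof. by case: x => //= ?; lia. Qed.

Lemma degle_trans x y z : degle x y -> degle y z -> degle x z.
Proof. by case: x; case: y; case: z => //= *; lia. Qed.

Lemma degmax_le x y z : degle x z -> degle y z -> degle (degmax x y) z.
Proof. by rewrite /degmax; case: ifP. Qed.

Lemma degltNge x y : deglt x y = ~~ degle y x.
Proof. by case: x; case: y => //= *; lia. Qed.

Lemma degltW x y : deglt x y -> degle x y.
Proof. by case: x; case: y => //= *; lia. Qed.

Lemma degle_lt_trans x y z : degle x y -> deglt y z -> deglt x z.
Proof. by case: x; case: y; case: z => //= *; lia. Qed.

Lemma degle_eqVlt x y : degle x y -> x = y \/ deglt x y.
Proof.
case: x => [v|]; case: y => [u|] //=; [|by right|by left].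
by case: (ltgtP v u) => [|?|->] ?; [right|lia|left].
Qed.

Lemma deglt_add2r (t : int) x y :
  deglt (degadd x (Some t)) (degadd y (Some t)) = deglt x y.
Proof. by case: x; case: y => //= *; lia. Qed.

Lemma deglt_add2l (t : int) x y :
  deglt (degadd (Some t) x) (degadd (Some t) y) = deglt x y.
Proof. by case: x; case: y => //= *; lia. Qed.

End DegreeOrder.

Section Evaluation.
Variables (K : fieldType) (S : naalg K) (a : S).

Lemma naevalE (p : {poly K}) n : (size p <= n)%N ->
  naeval a p = \sum_(i < n) p`_i *: a ^^ i.
Proof.
move=> le_pn; rewrite /naeval (big_ord_widen n (fun i => p`_i *: a ^^ i) le_pn).
rewrite big_mkcond /=; apply: eq_bigr => i _; case: ifP => // /negbT.
by rewrite -leqNgt => le_pi; rewrite nth_default // scale0r.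
Qed.

Lemma naeval_linear : linear (naeval a).
Proof.
move=> k p q; set n := maxn (size p) (size q).
have le_pn : (size p <= n)%N by rewrite leq_maxl.
have le_qn : (size q <= n)%N by rewrite leq_maxr.
have le_pqn : (size (k *: p + q)%R <= n)%N.
  rewrite (leq_trans (size_polyD _ _)) // geq_max le_qn andbT.
  exact: leq_trans (size_scale_leq _ _) le_pn.
rewrite !(naevalE le_pn) (naevalE le_qn) (naevalE le_pqn) scaler_sumr.
by rewrite -big_split; apply: eq_bigr => i _; rewrite coefD coefZ scalerDl scalerA.
Qed.

Lemma naeval_lead (p : {poly K}) : naeval a p =
  \sum_(i < (size p).-1) p`_i *: a ^^ i + lead_coef p *: a ^^ (size p).-1.
Proof. by rewrite (naevalE (leqSpred (size p))) big_ord_recr lead_coefE. Qed.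

Lemma naevalZXn (c : K) n : naeval a (c *: 'X^n) = c *: a ^^ n.
Proof.
rewrite (naevalE (n := n.+1)); last by rewrite (leq_trans (size_scale_leq _ _)) ?size_polyXn.
rewrite big_ord_recr /= big1 => [|i _]; last first.
  by rewrite coefZ coefXn (ltn_eqF (ltn_ord i)) mulr0 scale0r.
by rewrite add0r coefZ coefXn eqxx mulr1.
Qed.

Lemma naeval1 : naeval a 1 = naone S.
Proof. by have := naevalZXn 1 0; rewrite expr0 !scale1r. Qed.

Lemma naevalX : naeval a 'X = a.
Proof. by have := naevalZXn 1 1; rewrite expr1 !scale1r /= namul1l. Qed.

End Evaluation.

HB.instance Definition _ (K : fieldType) (S : naalg K) (a : S) :=
  GRing.isLinear.Build K {poly K} S *:%R (naeval a) (naeval_linear a).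

Section Nucleus.
Variables (K : fieldType) (S : naalg K) (a : S).
Hypothesis a_nucleus : in_nucleus a.

Lemma napowD i j : a ^^ i ** a ^^ j = a ^^ (i + j).
Proof.
elim: j => [|j IHj]; first by rewrite namul1r addn0.
by rewrite addnS /= -IHj; case: (a_nucleus (a ^^ i) (a ^^ j)) => _ [_ ->].
Qed.

Lemma naevalM (p q : {poly K}) : naeval a (p * q) = naeval a p ** naeval a q.
Proof.
have expand (r : {poly K}) : r = \sum_(i < size r) r`_i *: 'X^i by rewrite -{1}[r]coefK poly_def.
rewrite [in LHS](expand p) [in LHS](expand q) mulr_suml linear_sum.
rewrite [naeval a p]/naeval namul_suml; apply: eq_bigr => i _.
rewrite mulr_sumr linear_sum [naeval a q]/naeval namul_sumr.
apply: eq_bigr => j _; rewrite -scalerAr -scalerAl -exprD scalerA.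
by rewrite /= !naevalZXn namulZl namulZr napowD scalerA mulrC.
Qed.

Lemma gen_subalgE x : gen_subalg a x <-> exists p, x = naeval a p.
Proof.
split=> [x_gen | [p ->] B [B1 [BD [BZ BM]]] Ba].
  apply: (x_gen (fun u => exists p, u = naeval a p)); last by exists 'X; rewrite naevalX.
  split; first by exists 1; rewrite naeval1.
  split; first by move=> _ _ [p ->] [q ->]; exists (p + q); rewrite linearD.
  split; first by move=> k _ [p ->]; exists (k *: p); rewrite linearZ.
  by move=> _ _ [p ->] [q ->]; exists (p * q); rewrite naevalM.
have B0 : B 0 by rewrite -(scale0r (naone S)); apply: BZ.
have Bpow n : B (a ^^ n) by elim: n => //= n Bn; exact: BM.
by apply: (big_ind B) => // i _; apply: BZ.
Qed.

Lemma napow_mulA k y z : a ^^ k ** (y ** z) = (a ^^ k ** y) ** z.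
Proof.
elim: k y z => [|k IHk] y z /=; first by rewrite !namul1l.
have [_ [-> _]] := a_nucleus (a ^^ k) (y ** z).
have [-> _] := a_nucleus y z.
by rewrite IHk; have [_ [-> _]] := a_nucleus (a ^^ k) y.
Qed.

Lemma napow_mul_napow k n z : a ^^ k ** (a ^^ n ** z) = a ^^ (k + n) ** z.
Proof. by rewrite napow_mulA napowD. Qed.

Lemma centralizer_subsemimod_closed : subsemimod_closed (centralizer a).
Proof.
split; first split.
- by rewrite unfold_in /centralizer namul0l namul0r.
- by move=> x y; rewrite !unfold_in /centralizer namulDl namulDr => /eqP-> /eqP->.
- by move=> k x; rewrite !unfold_in /centralizer namulZl namulZr => /eqP->.
Qed.

Lemma centralizer1 : naone S \in centralizer a.
Proof. by rewrite unfold_in /centralizer namul1l namul1r. Qed.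

Lemma centralizer_napowl n z : z \in centralizer a -> a ^^ n ** z \in centralizer a.
Proof.
rewrite !unfold_in /centralizer => /eqP za.
have [_ [_ ->]] := a_nucleus (a ^^ n) z; have [-> _] := a_nucleus (a ^^ n) z.
have a_pow : a ^^ n ** a ^^ 1 = a ^^ 1 ** a ^^ n by rewrite !napowD addnC.
rewrite /= namul1l in a_pow.
by rewrite za napow_mulA a_pow.
Qed.

End Nucleus.

HB.instance Definition _ (K : fieldType) (S : naalg K) (a : S) :=
  GRing.isSubmodClosed.Build K S (centralizer a) (centralizer_subsemimod_closed a).

Section PseudoDegree.
Variables (K : fieldType) (S : naalg K) (chi : S -> option int).
Hypothesis chi_pd : pseudo_degree chi.

Lemma chi_eqNone x : chi x = None <-> x = 0.
Proof. by case: chi_pd. Qed.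

Lemma chi0 : chi 0 = None.
Proof. exact/chi_eqNone. Qed.

Lemma chiM x y : chi (x ** y) = degadd (chi x) (chi y).
Proof. by case: chi_pd => _ []. Qed.

Lemma chiD x y : degle (chi (x + y)) (degmax (chi x) (chi y)).
Proof. by case: chi_pd => _ []. Qed.

Lemma chi_sum_le (I : Type) (r : seq I) (P : pred I) (F : I -> S) d :
  (forall i, P i -> degle (chi (F i)) d) -> degle (chi (\sum_(i <- r | P i) F i)) d.
Proof.
move=> le_Fd; apply: (big_ind (fun s => degle (chi s) d)) => //; first by rewrite chi0.
by move=> x y le_x le_y; apply: degle_trans (chiD x y) (degmax_le le_x le_y).
Qed.

Lemma chi_sum_lt (I : Type) (r : seq I) (P : pred I) (F : I -> S) (D : int) :
  (forall i, P i -> deglt (chi (F i)) (Some D)) ->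
  deglt (chi (\sum_(i <- r | P i) F i)) (Some D).
Proof.
move=> lt_FD; have : degle (chi (\sum_(i <- r | P i) F i)) (Some (D - 1)).
  by apply: chi_sum_le => i /lt_FD; case: (chi (F i)) => //= u; lia.
by case: (chi _) => //= u; lia.
Qed.

Lemma chiD_lt x y d : deglt (chi x) d -> deglt (chi y) d -> deglt (chi (x + y)) d.
Proof. by move=> lt_x lt_y; apply: degle_lt_trans (chiD x y) _; rewrite /degmax; case: ifP. Qed.

Lemma chi1 : naone S != 0 -> chi (naone S) = Some 0.
Proof.
move=> one_neq0; have := chiM (naone S) (naone S); rewrite namul1l.
case E: (chi (naone S)) => [u|] /=; last by move/chi_eqNone: E; move/eqP: one_neq0.
by case=> ?; congr Some; lia.
Qed.

(* Not automatic: minus the 2-adic valuation on Q is a pseudo-degree with chi 2 = -1. *)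
Hypothesis chi_scalar_ge0 : forall k : K, k != 0 -> degle (Some 0) (chi (k *: naone S)).

Lemma chiZ (k : K) x : k != 0 -> chi (k *: x) = chi x.
Proof.
move=> k_neq0; have [->|x_neq0] := eqVneq x 0; first by rewrite scaler0.
have chik : chi (k *: naone S) = Some 0.
  have := chiM (k *: naone S) (k^-1 *: naone S).
  rewrite namulZl namulZr namul1l scalerA divff // scale1r (chi1 (naone_neq0 x_neq0)).
  have := chi_scalar_ge0 k_neq0; have := chi_scalar_ge0 (invr_neq0 k_neq0).
  case: (chi (k *: _)) => [u|] //; case: (chi (k^-1 *: _)) => [v|] //= ? ? [] ?.
  by congr Some; lia.
rewrite -[in LHS](namul1l x) -namulZl chiM chik.
by case: (chi x) => //= u; rewrite add0r.
Qed.

Lemma chiN x : chi (- x) = chi x.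
Proof. by rewrite -scaleN1r chiZ // oppr_eq0 oner_neq0. Qed.

Lemma chiD_eql x y : deglt (chi y) (chi x) -> chi (x + y) = chi x.
Proof.
move=> lt_yx; have le_sum : degle (chi (x + y)) (chi x).
  exact: degle_trans (chiD x y) (degmax_le (degle_refl _) (degltW lt_yx)).
have := chiD (x + y) (- y); rewrite addrK chiN /degmax.
case: (degle_eqVlt le_sum) => // lt_sum; case: ifP => _ le_x.
- by move: (degle_lt_trans le_x lt_yx); rewrite degltNge degle_refl.
- by move: (degle_lt_trans le_x lt_sum); rewrite degltNge degle_refl.
Qed.

End PseudoDegree.

Lemma mod_pigeonhole r l m (d : 'I_r -> nat) : (0 < m)%N -> (l * m < r)%N ->
  exists j, exists2 g : 'I_l.+1 -> 'I_r, injective g & forall k, (d (g k) %% m = j)%N.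
Proof.
move=> m_gt0 lt_r; pose f i : 'I_m := Ordinal (ltn_pmod (d i) m_gt0).
have [j lt_l] : exists j, (l < #|[pred i | f i == j]|)%N.
  apply/existsP; apply: contraLR lt_r => /existsPn le_l; rewrite -leqNgt.
  rewrite -{1}[r]card_ord -sum1_card (partition_big f predT) //=.
  apply: (@leq_trans (\sum_(j < m) l)); last by rewrite big_const_ord iter_addn_0 mulnC.
  by apply: leq_sum => j _; rewrite sum1_card leqNgt le_l.
exists j, (fun k => enum_val (widen_ord lt_l k)).
  by move=> k1 k2 /enum_val_inj /(congr1 val) /= /val_inj.
by move=> k; exact: (congr1 val (eqP (enum_valP (widen_ord lt_l k)))).
Qed.

Section Centralizer.
Variables (K : fieldType) (S : naalg K) (chi : S -> option int) (a : S) (m l : nat).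
Hypotheses (chi_pd : pseudo_degree chi) (a_nucleus : in_nucleus a).
Hypotheses (chi_a : chi a = Some m%:Z) (m_gt0 : (0 < m)%N).
Hypothesis centralizer_D : condD chi l (centralizer a).
Local Notation C := (centralizer a).

Lemma a_neq0 : a != 0.
Proof. by apply/eqP => a0; move: chi_a; rewrite a0 chi0. Qed.

Lemma chi_scalar_ge0 (k : K) : k != 0 -> degle (Some 0) (chi (k *: naone S)).
Proof.
have [ge0 _] := centralizer_D; move=> k_neq0; apply: ge0.
  by rewrite rpredZ // centralizer1.
by rewrite scaler_eq0 negb_or k_neq0 (naone_neq0 a_neq0).
Qed.

Lemma chi_napow n : chi (a ^^ n) = Some (n * m)%N%:Z.
Proof.
elim: n => [|n IHn]; first by rewrite chi1 // (naone_neq0 a_neq0).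
by rewrite chiM //= IHn chi_a /=; congr Some; rewrite mulSn; lia.
Qed.

Lemma chi_naeval_sub_lead (p : {poly K}) :
  deglt (chi (naeval a p - lead_coef p *: a ^^ (size p).-1))
        (Some ((size p).-1 * m)%N%:Z).
Proof.
rewrite naeval_lead addrK; apply: chi_sum_lt => // i _.
have [->|pi_neq0] := eqVneq p`_i 0; first by rewrite scale0r chi0.
by rewrite (chiZ chi_pd chi_scalar_ge0) // chi_napow /= ltz_nat ltn_pmul2r.
Qed.

Lemma chi_naeval (p : {poly K}) :
  p != 0 -> chi (naeval a p) = Some ((size p).-1 * m)%N%:Z.
Proof.
move=> p_neq0; set lead := lead_coef p *: a ^^ (size p).-1.
have chi_lead : chi lead = Some ((size p).-1 * m)%N%:Z.
  by rewrite (chiZ chi_pd chi_scalar_ge0) ?chi_napow ?lead_coef_eq0.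
have := chi_naeval_sub_lead p; rewrite -chi_lead => lt_rest.
by rewrite -[naeval a p](subrK lead) addrC (chiD_eql chi_pd chi_scalar_ge0 lt_rest).
Qed.

Lemma naeval_inj : injective (naeval a).
Proof.
move=> p q eq_pq; apply/eqP; rewrite -subr_eq0; apply/negPn/negP => pq_neq0.
by have := chi_naeval pq_neq0; rewrite linearB /= eq_pq subrr chi0.
Qed.

Lemma chi_naeval_mul (p : {poly K}) z :
  p != 0 -> chi (naeval a p ** z) = degadd (Some ((size p).-1 * m)%N%:Z) (chi z).
Proof. by move=> p_neq0; rewrite chiM // chi_naeval. Qed.

Lemma chi_naeval_mul_sub_lead (p : {poly K}) z : p != 0 -> z != 0 ->
  deglt (chi (naeval a p ** z - lead_coef p *: (a ^^ (size p).-1 ** z)))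
        (chi (naeval a p ** z)).
Proof.
move=> p_neq0 z_neq0; rewrite -namulZl -namulBl !chiM // chi_naeval //.
case E: (chi z) => [t|]; last by move/(chi_eqNone chi_pd): E; move/eqP: z_neq0.
by rewrite deglt_add2r chi_naeval_sub_lead.
Qed.

Definition ndeg (x : S) : nat := if chi x is Some d then `|d|%N else 0.

Lemma chi_centralizer x : x \in C -> x != 0 -> chi x = Some (ndeg x)%:Z.
Proof.
have [ge0 _] := centralizer_D; move=> xC x_neq0; have := ge0 x xC x_neq0.
by rewrite /ndeg; case: (chi x) => //= d d_ge0; congr Some; lia.
Qed.

Definition pcomb r (c : 'I_r -> S) (p : 'I_r -> {poly K}) : S :=
  \sum_i naeval a (p i) ** c i.

Definition pspan r (c : 'I_r -> S) (x : S) : Prop := exists p, x = pcomb c p.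

Definition chi_free r (c : 'I_r -> S) : Prop :=
  (forall i, c i != 0) /\
  forall (p : 'I_r -> {poly K}) (D : int),
    (forall i, degle (chi (naeval a (p i) ** c i)) (Some D)) ->
    (exists i, chi (naeval a (p i) ** c i) = Some D) ->
    chi (pcomb c p) = Some D.

Lemma pcombB r (c : 'I_r -> S) p q :
  pcomb c (fun i => p i - q i) = pcomb c p - pcomb c q.
Proof. by rewrite /pcomb -sumrB; apply: eq_bigr => i _; rewrite linearB namulBl. Qed.

Lemma pcombZ r (c : 'I_r -> S) k p : pcomb c (fun i => k *: p i) = k *: pcomb c p.
Proof. by rewrite /pcomb scaler_sumr; apply: eq_bigr => i _; rewrite linearZ namulZl. Qed.

Lemma pspan0 r (c : 'I_r -> S) : pspan c 0.
Proof.
by exists (fun=> 0); rewrite /pcomb big1 // => i _; rewrite linear0 namul0l.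
Qed.

Lemma nspan_neq0 r (c : 'I_r -> S) x : ~ pspan c x -> x != 0.
Proof. by apply: contra_not_neq => ->; apply: pspan0. Qed.

Lemma pspanB r (c : 'I_r -> S) x y : pspan c x -> pspan c y -> pspan c (x - y).
Proof. by move=> [p ->] [q ->]; exists (fun i => p i - q i); rewrite pcombB. Qed.

Lemma pspanZ r (c : 'I_r -> S) k x : pspan c x -> pspan c (k *: x).
Proof. by move=> [p ->]; exists (fun i => k *: p i); rewrite pcombZ. Qed.

Lemma chi_free_pcomb_eq0 r (c : 'I_r -> S) p : chi_free c -> (forall i, c i \in C) ->
  pcomb c p = 0 -> forall i, p i = 0.
Proof.
move=> [c_neq0 c_free] cC pc0 i; apply/eqP; apply: contraT => pi_neq0.
pose A := [pred j | p j != 0].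
pose dd j := ((size (p j)).-1 * m + ndeg (c j))%N.
have chi_term j : p j != 0 -> chi (naeval a (p j) ** c j) = Some (dd j)%:Z.
  by move=> pj_neq0; rewrite chi_naeval_mul // chi_centralizer //= PoszD.
have [j0 Aj0 max_j0] : {j0 | j0 \in A & \max_(j in A) dd j = dd j0}.
  by apply: eq_bigmax_cond; apply/card_gt0P; exists i.
suff : chi (pcomb c p) = Some (\max_(j in A) dd j)%:Z by rewrite pc0 chi0.
apply: c_free => [j|]; last by exists j0; rewrite chi_term // max_j0.
have [->|pj_neq0] := eqVneq (p j) 0; first by rewrite linear0 namul0l chi0.
by rewrite chi_term //= lez_nat; apply: leq_bigmax_cond.
Qed.

Lemma chi_free_inj r (c : 'I_r -> S) p q : chi_free c -> (forall i, c i \in C) ->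
  pcomb c p = pcomb c q -> p = q.
Proof.
move=> c_free cC eq_pq; apply: functional_extensionality => i; apply/eqP.
rewrite -subr_eq0; apply/eqP; apply: (chi_free_pcomb_eq0 (p := fun j => p j - q j) c_free cC).
by rewrite pcombB eq_pq subrr.
Qed.

Lemma chi_free_rank r (c : 'I_r -> S) :
  chi_free c -> (forall i, c i \in C) -> (r <= l * m)%N.
Proof.
move=> [c_neq0 c_free] cC; rewrite leqNgt; apply/negP => lt_r.
have [j [g g_inj d_g]] := mod_pigeonhole (fun i => ndeg (c i)) m_gt0 lt_r.
pose N := (\max_i (ndeg (c i) %/ m))%N.
pose e k := (N - ndeg (c (g k)) %/ m)%N.
pose b k := a ^^ e k ** c (g k).
have chi_b k : chi (b k) = Some (N * m + j)%N%:Z.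
  rewrite chiM // chi_napow chi_centralizer //= -PoszD; congr (Some (Posz _)).
  have le_N : (ndeg (c (g k)) %/ m <= N)%N.
    exact: (@leq_bigmax _ (fun i => ndeg (c i) %/ m)%N (g k)).
  by rewrite [X in (_ + X)%N](divn_eq _ m) d_g addnA -mulnDl subnK.
have b_C k : b k \in C by apply: centralizer_napowl.
have b_neq0 k : b k != 0 by apply/eqP => b0; move: (chi_b k); rewrite b0 chi0.
have [_ D_C] := centralizer_D.
have [alpha [[k0 alpha_k0] lt_comb]] :=
  D_C b b_C b_neq0 (fun k => etrans (chi_b k) (esym (chi_b ord0))).
pose p i := \sum_(k | g k == i) alpha k *: 'X^(e k).
have term i : naeval a (p i) ** c i = \sum_(k | g k == i) alpha k *: b k.
  rewrite linear_sum namul_suml; apply: eq_bigr => k /eqP <-.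
  by rewrite /= naevalZXn namulZl.
have comb : pcomb c p = \sum_k alpha k *: b k.
  by rewrite /pcomb (partition_big g predT) //=; apply: eq_bigr => i _; rewrite term.
have chiZb k : alpha k != 0 -> chi (alpha k *: b k) = Some (N * m + j)%N%:Z.
  by move=> alpha_k; rewrite (chiZ chi_pd chi_scalar_ge0) ?chi_b.
move: lt_comb; rewrite -comb chi_b (c_free p (N * m + j)%N%:Z) /= ?ltxx //.
  move=> i; rewrite term; apply: chi_sum_le => // k _.
  have [->|alpha_k] := eqVneq (alpha k) 0; first by rewrite scale0r chi0.
  by rewrite chiZb // degle_refl.
exists (g k0); rewrite term (big_pred1 k0) ?chiZb // => k.
by rewrite /= inj_eq.
Qed.

Definition fcons r (x : S) (c : 'I_r -> S) (i : 'I_r.+1) : S :=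
  if unlift ord0 i is Some j then c j else x.

Lemma fcons0 r x (c : 'I_r -> S) : fcons x c ord0 = x.
Proof. by rewrite /fcons unlift_none. Qed.

Lemma fcons_lift r x (c : 'I_r -> S) j : fcons x c (lift ord0 j) = c j.
Proof. by rewrite /fcons liftK. Qed.

Lemma pcomb_fcons r x (c : 'I_r -> S) p :
  pcomb (fcons x c) p = naeval a (p ord0) ** x + pcomb c (fun j => p (lift ord0 j)).
Proof. by rewrite /pcomb big_ord_recl fcons0; under eq_bigr do rewrite fcons_lift. Qed.

Lemma pspan_fcons r x (c : 'I_r -> S) y : pspan c y -> pspan (fcons x c) y.
Proof.
move=> [p ->]; exists (fun i => if unlift ord0 i is Some j then p j else 0).
rewrite pcomb_fcons unlift_none linear0 namul0l add0r.
by apply: eq_bigr => j _; rewrite liftK.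
Qed.

Lemma chi_sub_lead_shift (p : {poly K}) z k d :
  z \in C -> z != 0 -> (ndeg z <= d)%N ->
  chi (naeval a p ** z) = Some (k * m + d)%N%:Z ->
  deglt (chi (naeval a p ** z - lead_coef p *: (a ^^ k ** (a ^^ ((size p).-1 - k) ** z))))
        (Some (k * m + d)%N%:Z).
Proof.
move=> zC z_neq0 le_zd chi_pz.
have p_neq0 : p != 0 by apply/eqP => p0; move: chi_pz; rewrite p0 linear0 namul0l chi0.
have le_k : (k <= (size p).-1)%N.
  move: chi_pz; rewrite chi_naeval_mul // chi_centralizer //= -(leq_pmul2r m_gt0).
  by move: (_ * m)%N (k * m)%N => u v [] ?; lia.
by rewrite napow_mul_napow // subnKC // -chi_pz chi_naeval_mul_sub_lead.
Qed.

Lemma lead_cancel_lowers r (c : 'I_r -> S) x q p (D : int) :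
  (forall j, c j \in C) -> (forall j, c j != 0) ->
  (forall j, degle (chi (c j)) (chi x)) -> x \in C -> ~ pspan c x ->
  chi (naeval a q ** x) = Some D ->
  (forall j, degle (chi (naeval a (p j) ** c j)) (Some D)) ->
  deglt (chi (naeval a q ** x + pcomb c p)) (Some D) ->
  exists2 y, y \in C /\ ~ pspan c y & deglt (chi y) (chi x).
Proof.
move=> cC c_neq0 le_cx xC x_nspan chi_qx le_terms lt_sum.
have x_neq0 := nspan_neq0 x_nspan; have chi_x := chi_centralizer xC x_neq0.
have q_neq0 : q != 0 by apply/eqP => q0; move: chi_qx; rewrite q0 linear0 namul0l chi0.
set k := (size q).-1; set T := naeval a q ** x + pcomb c p.
have D_eq : D = (k * m + ndeg x)%N%:Z.
  by move: chi_qx; rewrite chi_naeval_mul // chi_x PoszD => -[].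
pose mu j := if chi (naeval a (p j) ** c j) == Some D then lead_coef (p j) else 0.
pose e j := ((size (p j)).-1 - k)%N.
pose y := lead_coef q *: x + \sum_j mu j *: (a ^^ e j ** c j).
have lt_term j :
    deglt (chi (naeval a (p j) ** c j - mu j *: (a ^^ k ** (a ^^ e j ** c j)))) (Some D).
  rewrite /mu; case: eqP => [chi_term|ne_D]; last first.
    by rewrite scale0r subr0; case: (degle_eqVlt (le_terms j)).
  have le_j : (ndeg (c j) <= ndeg x)%N by move: (le_cx j); rewrite !chi_centralizer.
  by move: chi_term; rewrite D_eq; apply: chi_sub_lead_shift.
have lt_ky : deglt (chi (a ^^ k ** y)) (Some D).
  have T_sub : T - a ^^ k ** y = (naeval a q ** x - lead_coef q *: (a ^^ k ** x)) +
      \sum_j (naeval a (p j) ** c j - mu j *: (a ^^ k ** (a ^^ e j ** c j))).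
    rewrite /T sumrB /y namulDr namulZr namul_sumr.
    by under eq_bigr do rewrite namulZr; rewrite opprD addrACA.
  rewrite -[a ^^ k ** y](subKr T); apply: chiD_lt => //.
  rewrite (chiN chi_pd chi_scalar_ge0) T_sub; apply: chiD_lt => //; last exact: chi_sum_lt.
  by rewrite -chi_qx chi_naeval_mul_sub_lead.
exists y; last first.
  have chi_kx : degadd (Some (k * m)%N%:Z) (chi x) = Some D by rewrite chi_x D_eq /= PoszD.
  by move: lt_ky; rewrite chiM // chi_napow -chi_kx deglt_add2l.
split.
  rewrite rpredD ?rpredZ // rpred_sum // => j _.
  by rewrite rpredZ // centralizer_napowl.
move=> y_span; apply: x_nspan.
have comb_mu : pcomb c (fun j => mu j *: 'X^(e j)) = \sum_j mu j *: (a ^^ e j ** c j).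
  by apply: eq_bigr => j _; rewrite naevalZXn namulZl.
have -> : x = (lead_coef q)^-1 *: (y - pcomb c (fun j => mu j *: 'X^(e j))).
  by rewrite comb_mu /y addrK scalerA mulVf ?scale1r // lead_coef_eq0.
by apply/pspanZ/pspanB => //; eexists.
Qed.

Lemma chi_free_fcons r (c : 'I_r -> S) x :
  chi_free c -> (forall j, c j \in C) -> x \in C -> ~ pspan c x ->
  (forall j, degle (chi (c j)) (chi x)) ->
  (forall y, y \in C -> ~ pspan c y -> degle (chi x) (chi y)) ->
  chi_free (fcons x c).
Proof.
move=> [c_neq0 c_free] cC xC x_nspan le_cx x_min.
have x_neq0 := nspan_neq0 x_nspan.
split=> [i|p D le_D [i0 chi_i0]]; first by rewrite /fcons; case: unlift.
rewrite pcomb_fcons; set p' := fun j => p (lift ord0 j).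
have le_x : degle (chi (naeval a (p ord0) ** x)) (Some D).
  by have := le_D ord0; rewrite fcons0.
have le_c j : degle (chi (naeval a (p' j) ** c j)) (Some D).
  by have := le_D (lift ord0 j); rewrite fcons_lift.
case: (degle_eqVlt le_x) => [chi_x|lt_x].
  have le_sum : degle (chi (naeval a (p ord0) ** x + pcomb c p')) (Some D).
    apply: degle_trans (chiD chi_pd _ _) (degmax_le le_x _).
    exact: chi_sum_le.
  case: (degle_eqVlt le_sum) => // lt_sum.
  have [y [yC y_nspan]] := lead_cancel_lowers cC c_neq0 le_cx xC x_nspan chi_x le_c lt_sum.
  by rewrite degltNge x_min.
have [j0 i0E] : exists j0, i0 = lift ord0 j0.
  case: (unliftP ord0 i0) chi_i0 => [j0 ->|->]; first by exists j0.
  by rewrite fcons0 => chi_D; move: lt_x; rewrite chi_D /= ltxx.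
have chi_rest : chi (pcomb c p') = Some D.
  by apply: c_free => //; exists j0; rewrite -chi_i0 i0E fcons_lift.
have lt_x_rest : deglt (chi (naeval a (p ord0) ** x)) (chi (pcomb c p')) by rewrite chi_rest.
by rewrite addrC (chiD_eql chi_pd chi_scalar_ge0 lt_x_rest).
Qed.

Lemma exists_chi_min (P : S -> Prop) :
  (forall y, P y -> y \in C /\ y != 0) ->
  forall y, P y -> exists2 x, P x & forall z, P z -> degle (chi x) (chi z).
Proof.
move=> P_C y; move: {2}(ndeg y) (erefl (ndeg y)) => n.
elim/ltn_ind: n y => n IHn y ndeg_y Py; have [yC y_neq0] := P_C y Py.
case: (classic (exists2 z, P z & deglt (chi z) (chi y))) => [[z Pz lt_zy]|no_lower].
  have [zC z_neq0] := P_C z Pz.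
  apply: (IHn (ndeg z)) => //; move: lt_zy.
  by rewrite !chi_centralizer //= -ndeg_y ltz_nat.
exists y => // z Pz; rewrite -[degle _ _]negbK -degltNge.
by apply/negP => lt_zy; apply: no_lower; exists z.
Qed.

Lemma greedy_chi_free n : exists r (c : 'I_r -> S),
  [/\ chi_free c, forall i, c i \in C,
      forall i y, y \in C -> ~ pspan c y -> degle (chi (c i)) (chi y)
    & r = n \/ forall y, y \in C -> pspan c y].
Proof.
elim: n => [|n [r [c [c_free cC c_min [r_n|c_span]]]]].
- by exists 0%N, (fun=> 0); split; [split=> [[]|p D _ [[]]] | case | case | left].
- case: (classic (forall y, y \in C -> pspan c y)) => [c_span|c_nspan].
    by exists r, c; split=> //; right.
  have [y0 [y0C y0_nspan]] : exists y, y \in C /\ ~ pspan c y.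
    apply: NNPP => none; apply: c_nspan => y yC.
    by apply: NNPP => y_nspan; apply: none; exists y.
  have P_C y : y \in C /\ ~ pspan c y -> y \in C /\ y != 0.
    by move=> [yC /nspan_neq0].
  have [x [xC x_nspan] x_min] := exists_chi_min P_C (conj y0C y0_nspan).
  have x_min' y : y \in C -> ~ pspan c y -> degle (chi x) (chi y).
    by move=> yC y_nspan; apply: x_min.
  exists r.+1, (fcons x c); split.
  + by apply: chi_free_fcons => // j; apply: c_min.
  + by move=> i; rewrite /fcons; case: unlift.
  + move=> i y yC y_nspan; have y_nspan' : ~ pspan c y by move/(pspan_fcons x).
    by rewrite /fcons; case: unlift => [j|]; [apply: c_min | apply: x_min'].
  + by left; rewrite r_n.
- by exists r, c; split=> //; right.
Qed.

End Centralizer.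

Theorem theorem2p8 (K : fieldType) (S : naalg K) (chi : S -> option int)
    (a : S) (m l : nat) :
  (2%:R : K) != 0 ->
  pseudo_degree chi ->
  in_nucleus a ->
  chi a = Some (m%:Z) -> (0 < m)%N ->
  (0 < l)%N ->
  condD chi l (centralizer a) ->
  (* K[a] ≅ K[x]: evaluation at a is a K-algebra isomorphism onto K[a] *)
  ((forall (k : K) (p q : {poly K}), naeval a (k *: p + q) = k *: naeval a p + naeval a q)
   /\ naeval a 1 = naone S
   /\ (forall p q : {poly K}, naeval a (p * q) = namul (naeval a p) (naeval a q))
   /\ injective (naeval a)
   /\ (forall x, gen_subalg a x <-> exists p, x = naeval a p))
  /\
  (* C_S(a) is a free left K[a]-module of rank at most l*m *)
  (exists (r : nat) (c : 'I_r -> S),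
      (r <= l * m)%N
      /\ (forall i, c i \in centralizer a)
      /\ (forall x, x \in centralizer a ->
            exists p : 'I_r -> {poly K},
              x = \sum_i namul (naeval a (p i)) (c i))
      /\ (forall p q : 'I_r -> {poly K},
            \sum_i namul (naeval a (p i)) (c i) = \sum_i namul (naeval a (q i)) (c i) ->
            p = q)).
Proof.
move=> _ chi_pd a_nucleus chi_a m_gt0 _ condD_C.
split.
  split; first exact: naeval_linear.
  split; first exact: naeval1.
  split; first exact: naevalM.
  by split; [exact: (naeval_inj chi_pd chi_a m_gt0 condD_C) | exact: gen_subalgE].
have [r [c [c_free cC _ c_spec]]] :=
  greedy_chi_free chi_pd a_nucleus chi_a m_gt0 condD_C (l * m).+1.
have r_le := chi_free_rank chi_pd a_nucleus chi_a m_gt0 condD_C c_free cC.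
have c_span : forall x, x \in centralizer a -> pspan a c x.
  by case: c_spec => // r_eq; exfalso; move: r_le; rewrite r_eq ltnn.
exists r, c; do 3!split=> //.
move=> p q; exact: (chi_free_inj chi_pd chi_a m_gt0 condD_C c_free cC).
Qed.
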